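(* Let $\mathcal{P}$ be a set of scripts, let $\Phi$ be the uniform abstraction defined by $\mathcal{P}$, and let $\Omega$ be an asymmetric abstraction defined by the same set of scripts $\mathcal{P}$ (with any choice of unrestricted units $\mathcal{U}'_i(s) \subseteq \mathcal{U}^r_i(s)$ at each state $s$). For a finite match with start state $s$, let $V_i^{\Phi}(s)$ be the optimal value of the game for player $i$ computed in the space induced by $\Phi$, and let $V_i^{\Omega}(s)$ be defined analogously for $\Omega$. Then $V_i^{\Omega}(s) \ge V_i^{\Phi}(s)$.
   Context: A match is a finite two-player zero-sum game with simultaneous moves between players $i$ and $-i$, given by a finite game tree: states $\mathcal{S}=\mathcal{D}\cup\mathcal{F}$ (non-terminal and terminal), a deterministic transition function $\mathcal{T}(s,a_i,a_{-i})$, and a utility $\mathcal{R}_i:\mathcal{F}\to\mathbb{R}$ with $\mathcal{R}_{-i}=-\mathcal{R}_i$. Each state contains units; at state $s$, $\mathcal{U}^r_i(s)$ denotes player $i$'s ready units, and $\mathcal{M}(s,u)$ denotes the set of legal moves of unit $u$ at $s$. A legal action of player $i$ at $s$ is a vector assigning one legal move to each ready unit of $i$; $\mathcal{A}_i(s)$ is the set of such actions. A script $\bar\sigma$ is a function mapping a state $s$ and a unit $u$ to a legal move $\bar\sigma(s,u)\in\mathcal{M}(s,u)$. For a set of scripts $\mathcal{P}$, let $\mathcal{M}(s,u,\mathcal{P})=\{\bar\sigma(s,u):\bar\sigma\in\mathcal{P}\}$. The uniform abstraction $\Phi$ induced by $\mathcal{P}$ restricts player $i$'s actions at each state $s$ to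 $\mathcal{A}'_i(s)$, the Cartesian product of $\mathcal{M}(s,u,\mathcal{P})$ over all $u\in\mathcal{U}^r_i(s)$. An asymmetric abstraction $\Omega$ induced by $\mathcal{P}$ and a set of unrestricted units $\mathcal{U}'_i(s)\subseteq\mathcal{U}^r_i(s)$ restricts player $i$'s actions at $s$ to $\mathcal{A}''_i(s)$, the Cartesian product of $\mathcal{M}(s,u,\mathcal{P})$ over $u\in\mathcal{U}^r_i(s)\setminus\mathcal{U}'_i(s)$ and of $\mathcal{M}(s,u')$ over $u'\in\mathcal{U}'_i(s)$. The optimal value $V_i^{\Phi}$ is defined by backward induction: $V_i^{\Phi}(z)=\mathcal{R}_i(z)$ for terminal $z$, and for non-terminal $s$, $V_i^{\Phi}(s)=\max_{\sigma_i}\min_{\sigma_{-i}}\sum_{a_i}\sum_{a_{-i}\in\mathcal{A}_{-i}(s)}\sigma_i(s,a_i)\sigma_{-i}(s,a_{-i})V_i^{\Phi}(\mathcal{T}(s,a_i,a_{-i}))$, where $\sigma_i$ ranges over probability distributions over $\mathcal{A}'_i(s)$ and $\sigma_{-i}$ over probability distributions over all of $\mathcal{A}_{-i}(s)$ (player $-i$ is unrestricted); $V_i^{\Omega}$ is defined the same way with $\mathcal{A}''_i(s)$ in place of $\mathcal{A}'_i(s)$. *)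

From HB Require Import structures.
From mathcomp Require Import all_boot all_order all_algebra.
From mathcomp Require Import classical_sets reals.
Set Implicit Arguments. Unset Strict Implicit. Unset Printing Implicit Defensive.
Import Order.TTheory GRing.Theory Num.Theory.
Local Open Scope ring_scope.
Local Open Scope classical_set_scope.

(* A player action at a state: a vector assigning a move to every ready
   unit of that player.  It is encoded as a finite function on all units,
   with [Some m] on ready units and [None] on non-ready units. *)
Definition act (U Mv : finType) := {ffun U -> option Mv}.

Definition prod_action (U Mv : finType) (ready : {set U}) (M : U -> set Mv)
  (a : act U Mv) : Prop :=
  forall u, (u \in ready -> exists2 m, a u = Some m & M u m) /\
            (u \notin ready -> a u = None).

(* Players are booleans: player [p]'s opponent is [~~ p].
   [trans s a b] : [a] is the action of player [true], [b] of player [false].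
   [util] is the utility of player [true] (player [false] gets [- util]).
   Finiteness of the game tree is witnessed by a depth that strictly
   decreases along every legal transition from a non-terminal state. *)
Record game (R : realType) := Game {
  St : finType;
  Un : finType;
  Mv : finType;
  ready : bool -> St -> {set Un};
  moves : St -> Un -> {set Mv};
  trans : St -> act Un Mv -> act Un Mv -> St;
  terminal : pred St;
  util : St -> R;
  depth : St -> nat;
  depth_dec : forall s a b, ~~ terminal s ->
    prod_action (ready true s) (fun u m => m \in moves s u) a ->
    prod_action (ready false s) (fun u m => m \in moves s u) b ->
    (depth (trans s a b) < depth s)%N
}.

Arguments ready {R} g _ _.
Arguments moves {R} g _ _.
Arguments trans {R} g _ _ _.
Arguments terminal {R} g _.
Arguments util {R} g _.
Arguments depth {R} g _.

Section Game.
Variables (R : realType) (G : game R).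

Definition action_of := act (Un G) (Mv G).

Definition legal (p : bool) (s : St G) : set action_of :=
  prod_action (ready G p s) (fun u m => m \in moves G s u).

Definition utilp (p : bool) (z : St G) : R := if p then util G z else - util G z.

Definition transp (p : bool) (s : St G) (a b : action_of) : St G :=
  if p then trans G s a b else trans G s b a.

Definition script := St G -> Un G -> Mv G.
Definition is_script (sc : script) : Prop := forall s u, sc s u \in moves G s u.

Definition script_moves (P : set script) (s : St G) (u : Un G) : set (Mv G) :=
  [set m | exists2 sc, P sc & sc s u = m].

Definition uniform_actions (P : set script) (p : bool) (s : St G) : set action_of :=
  prod_action (ready G p s) (script_moves P s).

Definition asym_actions (P : set script) (Ufree : St G -> {set Un G})
  (p : bool) (s : St G) : set action_of :=
  prod_action (ready G p s)
    (fun u m => if u \in Ufree s then is_true (m \in moves G s u)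
                else script_moves P s u m).

Definition is_dist (A : set action_of) (sg : {ffun action_of -> R}) : Prop :=
  [/\ forall a, 0 <= sg a, forall a, ~ A a -> sg a = 0 & \sum_a sg a = 1].

Fixpoint value_fuel (Ap : St G -> set action_of) (p : bool) (n : nat)
  (s : St G) : R :=
  if terminal G s then utilp p s else
  match n with
  | 0 => 0
  | n'.+1 =>
    sup [set x | exists sg, is_dist (Ap s) sg /\
      x = inf [set y | exists tau, is_dist (legal (~~ p) s) tau /\
        y = \sum_a \sum_b sg a * tau b * value_fuel Ap p n' (transp p s a b)]]
  end.

Definition value (Ap : St G -> set action_of) (p : bool) (s : St G) : R :=
  value_fuel Ap p (depth G s) s.

End Game.

(* Every action of the uniform abstraction is also an action of the
   asymmetric one, since a script move is in particular a legal move.  So at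
   every state the maximiser of the asymmetric game optimises over a superset
   of mixed strategies, against the same unrestricted opponent; by backward
   induction each maxmin value can only grow. *)
From mathcomp Require Import all_boot all_order all_algebra.
From mathcomp Require Import boolp classical_sets reals.
Set Implicit Arguments. Unset Strict Implicit. Unset Printing Implicit Defensive.
Import Order.TTheory GRing.Theory Num.Theory.
Local Open Scope ring_scope.
Local Open Scope classical_set_scope.

Section SupInf.
Variable R : realType.

Lemma le_inf_image (U : Type) (Q : set U) (f g : U -> R) (M : R) :
  (forall u, Q u -> - M <= f u) -> (forall u, Q u -> f u <= g u) ->
  inf [set y | exists u, Q u /\ y = f u] <= inf [set y | exists u, Q u /\ y = g u].
Proof.
move=> fM fg.
have [[u0 Qu0]|nQ] := pselect (exists u, Q u); last first.
  have E (h : U -> R) : [set y | exists u, Q u /\ y = h u] = set0.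
    by apply/seteqP; split => // y [u [Qu _]]; apply: nQ; exists u.
  by rewrite !E.
apply: lb_le_inf; first by exists (g u0), u0.
move=> _ [u [Qu ->]]; apply: le_trans (fg _ Qu).
by apply: ge_inf; [exists (- M) => _ [v [Qv ->]]; exact: fM | exists u].
Qed.

Lemma inf_image_le (U : Type) (Q : set U) (f : U -> R) (M : R) :
  0 <= M -> (forall u, Q u -> `|f u| <= M) ->
  inf [set y | exists u, Q u /\ y = f u] <= M.
Proof.
move=> M0 fM.
have [[u0 Qu0]|nQ] := pselect (exists u, Q u); last first.
  have -> : [set y | exists u, Q u /\ y = f u] = set0.
    by apply/seteqP; split => // y [u [Qu _]]; apply: nQ; exists u.
  by rewrite inf0.
apply: (@le_trans _ _ (f u0)); last exact: le_trans (ler_norm _) (fM _ Qu0).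
apply: ge_inf; last by exists u0.
by exists (- M) => _ [u [Qu ->]]; have := fM _ Qu; rewrite ler_norml => /andP[].
Qed.

(* The payoff bounds are needed since [sup] and [inf] of unbounded sets are
   junk values. *)
Lemma le_sup_inf (T U : Type) (A B : set T) (Q : set U) (F H : T -> U -> R)
    (MF MH : R) :
  A !=set0 -> A `<=` B ->
  (forall a u, A a -> Q u -> F a u <= H a u) ->
  (forall a u, A a -> Q u -> `|F a u| <= MF) ->
  0 <= MH -> (forall a u, B a -> Q u -> `|H a u| <= MH) ->
  sup [set x | exists a, A a /\ x = inf [set y | exists u, Q u /\ y = F a u]] <=
  sup [set x | exists a, B a /\ x = inf [set y | exists u, Q u /\ y = H a u]].
Proof.
move=> [a0 Aa0] AB FH FM MH0 HM.
apply: ge_sup; first by exists (inf [set y | exists u, Q u /\ y = F a0 u]), a0.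
move=> _ [a [Aa ->]].
have FMa u : Q u -> - MF <= F a u.
  by move=> Qu; have := FM _ _ Aa Qu; rewrite ler_norml => /andP[].
apply: le_trans (le_inf_image FMa (fun u => FH a u Aa)) _.
apply: ub_le_sup; last by exists a; split; first exact: AB.
by exists MH => _ [b [Bb ->]]; apply: inf_image_le => // u; exact: HM.
Qed.

End SupInf.

Section Distributions.
Variables (R : realType) (G : game R).
Implicit Types (A B : set (action_of G)) (sg tau : {ffun action_of G -> R}).

Lemma is_dist_subset A B sg : A `<=` B -> is_dist A sg -> is_dist B sg.
Proof. by move=> AB [sg0 sgA sg1]; split=> // a nBa; apply: sgA => /AB. Qed.

Lemma is_dist_point A a : A a -> is_dist A [ffun b => (b == a)%:R].
Proof.
move=> Aa; split=> [b|b nAb|]; rewrite ?ffunE.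
- exact: ler0n.
- by case: eqP => // ba; rewrite ba in nAb.
- rewrite (bigD1 a) //= ffunE eqxx big1 ?addr0 // => b /negbTE ba.
  by rewrite ffunE ba.
Qed.

Lemma is_dist_ge0_le1 A sg a : is_dist A sg -> 0 <= sg a <= 1.
Proof.
case=> sg0 _ sg1; rewrite sg0 -sg1 (bigD1 a) //= lerDl.
by apply: sumr_ge0 => b _; exact: sg0.
Qed.

Lemma ler_expected A B sg tau (f g : action_of G -> action_of G -> R) :
  is_dist A sg -> is_dist B tau -> (forall a b, f a b <= g a b) ->
  \sum_a \sum_b sg a * tau b * f a b <= \sum_a \sum_b sg a * tau b * g a b.
Proof.
move=> dsg dtau fg; apply: ler_sum => a _; apply: ler_sum => b _.
have /andP[sga0 _] := is_dist_ge0_le1 a dsg.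
have /andP[taub0 _] := is_dist_ge0_le1 b dtau.
by apply: ler_wpM2l; first exact: mulr_ge0.
Qed.

Lemma norm_expected_le A B sg tau (f : action_of G -> action_of G -> R) :
  is_dist A sg -> is_dist B tau ->
  `|\sum_a \sum_b sg a * tau b * f a b| <= \sum_a \sum_b `|f a b|.
Proof.
move=> dsg dtau.
apply: le_trans (ler_norm_sum _ _ _) _; apply: ler_sum => a _.
apply: le_trans (ler_norm_sum _ _ _) _; apply: ler_sum => b _.
have /andP[sga0 sga1] := is_dist_ge0_le1 a dsg.
have /andP[taub0 taub1] := is_dist_ge0_le1 b dtau.
rewrite !normrM (ger0_norm sga0) (ger0_norm taub0) -[leRHS]mul1r.
by apply: ler_wpM2r => //; rewrite -[1]mul1r; apply: ler_pM.
Qed.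

End Distributions.

Section Abstractions.
Variables (R : realType) (G : game R).
Implicit Types (Ap Aq : St G -> set (action_of G)) (P : set (script G)).

(* Non-emptiness of the smaller abstraction is needed: [sup set0 = 0]. *)
Lemma value_fuel_subset Ap Aq p n s :
  (forall t, Ap t !=set0) -> (forall t, Ap t `<=` Aq t) ->
  value_fuel Ap p n s <= value_fuel Aq p n s.
Proof.
move=> Ap0 ApAq; elim: n s => [|n IHn] s /=; first by case: ifP.
case: ifP => // _.
have [a Apa] := Ap0 s.
pose bound Ar := \sum_a' \sum_b `|value_fuel Ar p n (transp p s a' b)|.
apply: (le_sup_inf (MF := bound Ap) (MH := bound Aq)).
- by exists [ffun b => (b == a)%:R]; exact: is_dist_point.
- by move=> sg; apply: is_dist_subset.
- by move=> sg tau dsg dtau; apply: ler_expected dsg dtau _ => a' b; exact: IHn.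
- by move=> sg tau dsg dtau; exact: norm_expected_le dsg dtau.
- by apply: sumr_ge0 => a' _; apply: sumr_ge0.
- by move=> sg tau dsg dtau; exact: norm_expected_le dsg dtau.
Qed.

Lemma uniform_actions_neq0 P p t : P !=set0 -> uniform_actions P p t !=set0.
Proof.
move=> [sc Psc]; exists [ffun u => if u \in ready G p t then Some (sc t u) else None].
move=> u; rewrite ffunE; split=> [->|/negbTE -> //].
by exists (sc t u) => //; exists sc.
Qed.

Lemma uniform_sub_asym_actions P Ufree p t :
  (forall sc, P sc -> is_script sc) ->
  uniform_actions P p t `<=` asym_actions P Ufree p t.
Proof.
move=> Pscript a Ua u; have [Ua_ready Ua_idle] := Ua u; split=> // /Ua_ready.
case=> m am [sc Psc scm]; exists m => //; case: ifP => _; last by exists sc.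
by rewrite -scm; exact: Pscript.
Qed.

End Abstractions.

Theorem theorem1 (R : realType) (G : game R) (P : set (script G))
  (Ufree : St G -> {set Un G}) (i : bool) (s : St G) :
  (forall sc, P sc -> is_script sc) ->
  P !=set0 ->
  (forall t, Ufree t \subset ready G i t) ->
  value (uniform_actions P i) i s <= value (asym_actions P Ufree i) i s.
Proof.
move=> Pscript P0 _; apply: value_fuel_subset => t.
- exact: uniform_actions_neq0.
- exact: uniform_sub_asym_actions.
Qed.
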